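(* For $\alpha\in[-1,1]$ let $\rho(\alpha)=\tfrac12(I+\alpha\sigma_x)=\tfrac12\begin{pmatrix}1&\alpha\\\alpha&1\end{pmatrix}$. Then for all $\alpha,\beta\in[-1,1]$ and $p\ge1$, $$D^p_{z,p}(\rho(\alpha),\rho(\beta))=2^{p-1}\Big(1-\sqrt{1-\max(\alpha^2,\beta^2)}\Big).$$
   Context: Qubit setting: $\mathcal{H}=\mathbb{C}^2$, $\mathcal{H}^*$ is identified with $\mathbb{C}^2$ via the dual basis, and $A^T$ is the usual matrix transpose; operators on $\mathcal{H}\otimes\mathcal{H}^*$ are $4\times4$ matrices in the basis $e_1\otimes e_1^*,e_1\otimes e_2^*,e_2\otimes e_1^*,e_2\otimes e_2^*$. $\sigma_x=\begin{pmatrix}0&1\\1&0\end{pmatrix}$, $\sigma_y=\begin{pmatrix}0&-i\\i&0\end{pmatrix}$, $\sigma_z=\begin{pmatrix}1&0\\0&-1\end{pmatrix}$. The set of couplings of states $\rho,\omega$ is $\mathcal{C}(\rho,\omega)=\{\Pi\in\mathcal{S}(\mathcal{H}\otimes\mathcal{H}^* ):\mathrm{tr}_{\mathcal{H}^*}[\Pi]=\omega,\ \mathrm{tr}_{\mathcal{H}}[\Pi]=\rho^T\}$. For $p\ge1$, $C_{z,p}=|\sigma_z\otimes I^T-I\otimes\sigma_z^T|^p=2^{p-1}(I\otimes I^T-\sigma_z\otimes\sigma_z^T)=\mathrm{diag}(0,2^p,2^p,0)$, and $D_{z,p}(\rho,\omega)=\big(\min_{\Pi\in\mathcal{C}(\rho,\omega)}\mathrm{tr}[\Pi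 C_{z,p}]\big)^{1/p}$. *)

From HB Require Import structures.
From mathcomp Require Import all_boot all_order all_algebra.
From mathcomp Require Import complex.
From mathcomp Require Import reals exp.
Set Implicit Arguments. Unset Strict Implicit. Unset Printing Implicit Defensive.
Import Order.TTheory GRing.Theory Num.Theory.
Local Open Scope ring_scope.
Local Open Scope complex_scope.

Section Defs.
Variable R : realType.
Notation C := (R[i]).

Definition adjmx m n (A : 'M[C]_(m, n)) : 'M[C]_(n, m) :=
  \matrix_(i, j) (A j i)^*.

Definition psd n (A : 'M[C]_n) : Prop :=
  adjmx A = A /\ forall v : 'cV[C]_n, 0 <= (adjmx v *m A *m v) ord0 ord0.

Definition is_state n (A : 'M[C]_n) : Prop := psd A /\ \tr A = 1.

(* basis e_i (x) e_j^* of H (x) H^* is indexed by 2*i + j *)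
Definition idx (i j : 'I_2) : 'I_4 := inord (2 * i + j).

Definition ptr2 (P : 'M[C]_4) : 'M[C]_2 :=
  \matrix_(i, k) \sum_(j < 2) P (idx i j) (idx k j).
Definition ptr1 (P : 'M[C]_4) : 'M[C]_2 :=
  \matrix_(j, l) \sum_(i < 2) P (idx i j) (idx i l).

Definition coupling (rho omega : 'M[C]_2) (P : 'M[C]_4) : Prop :=
  is_state P /\ ptr2 P = omega /\ ptr1 P = rho^T.

Definition tens (A B : 'M[C]_2) : 'M[C]_4 :=
  \matrix_(a, b) \sum_(i < 2) \sum_(j < 2) \sum_(k < 2) \sum_(l < 2)
     (if (a == idx i j) && (b == idx k l) then A i k * B j l else 0).

Definition sigma_x : 'M[C]_2 := \matrix_(i, j) (if i == j then 0 else 1).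
Definition sigma_z : 'M[C]_2 :=
  \matrix_(i, j) (if i == j then (if i == ord0 then 1 else -1) else 0).

(* C_{z,p} = 2^(p-1) (I (x) I^T - sigma_z (x) sigma_z^T) = diag(0,2^p,2^p,0) *)
Definition Czp (p : R) : 'M[C]_4 :=
  ((2 `^ (p - 1))%:C) *: (tens 1 1%:M^T - tens sigma_z sigma_z^T).

(* minimal transport cost: m = min_{P in C(rho,omega)} tr[P C_{z,p}], i.e.
   D_{z,p}(rho,omega)^p = m *)
Definition is_min_cost (p : R) (rho omega : 'M[C]_2) (m : R) : Prop :=
  (exists P, coupling rho omega P /\ \tr (P *m Czp p) = m%:C) /\
  (forall P, coupling rho omega P -> m%:C <= \tr (P *m Czp p)).

Definition rho_x (a : R) : 'M[C]_2 := 2^-1 *: (1%:M + (a%:C) *: sigma_x).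

End Defs.

From HB Require Import structures.
From mathcomp Require Import all_boot all_order all_algebra.
From mathcomp Require Import complex.
From mathcomp Require Import reals exp.
From mathcomp Require Import ring lra.
Import Order.TTheory GRing.Theory Num.Theory.
Local Open Scope ring_scope.

(* Only the diagonal entries P11 and P22 of a coupling P enter the cost, and
   the marginal constraints force both to equal 1/2 - x with x := P00.
   Positivity of P, tested on real vectors supported on {e0, e2} and {e1, e3}
   (resp. {e0, e1} and {e2, e3}), yields the binary quadratic form
   2x u^2 + b u w + (1 - 2x) w^2 >= 0 (resp. with a), whose discriminant gives
   m := max(a^2, b^2) <= 8x(1 - 2x) = 1 - (4x - 1)^2, i.e. 4x - 1 <= sqrt(1 - m).
   Conversely, the coupling with P00 = (1 + sqrt(1 - m))/4 is block diagonal
   in the basis (e0 +- e3, e1 +- e2), each 2x2 block being positive because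
   (m + ab)^2 - m (a + b)^2 = (m - a^2)(m - b^2) >= 0. *)

Set Implicit Arguments. Unset Strict Implicit. Unset Printing Implicit Defensive.

Lemma quad_form2_ge0P (R : realFieldType) (A B C : R) :
  (forall u w, 0 <= A * u ^+ 2 + B * u * w + C * w ^+ 2) <->
  [/\ 0 <= A, 0 <= C & B ^+ 2 <= 4 * A * C].
Proof.
split=> [q | [A_ge0 C_ge0 disc] u w].
- have A_ge0 := q 1 0; have C_ge0 := q 0 1; have h1 := q (- B) (2 * A).
  have h2 := q (2 * C) (- B); have h3 := q 1 (- B).
  split; rewrite ?expr1n ?expr0n ?mulr0 ?mulr1 ?addr0 ?add0r // in A_ge0 C_ge0 *.
  (* the values at (-B, 2A) and (2C, -B) are A (4AC - B^2) and C (4AC - B^2) *)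
  have key : 0 <= (A + C) * (4 * A * C - B ^+ 2) by nra.
  have [AC0|AC_gt0] : A + C = 0 \/ 0 < A + C by lra.
    have [-> ->] : A = 0 /\ C = 0 by lra.
    nra.
  by rewrite -subr_ge0; move: key; rewrite pmulr_rge0.
- have E : 4 * A * (A * u ^+ 2 + B * u * w + C * w ^+ 2) =
      (2 * A * u + B * w) ^+ 2 + (4 * A * C - B ^+ 2) * w ^+ 2 by ring.
  have [A_eq0|A_neq0] := eqVneq A 0.
    rewrite A_eq0 !(mulr0, mul0r) in disc *.
    have -> : B = 0 by apply/eqP; rewrite -sqrf_eq0 eq_le disc sqr_ge0.
    by rewrite !mul0r !add0r mulr_ge0 ?sqr_ge0.
  have A_gt0 : 0 < A by rewrite lt_def A_neq0.
  have : 0 <= 4 * A * (A * u ^+ 2 + B * u * w + C * w ^+ 2).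
    by rewrite E addr_ge0 ?sqr_ge0 // mulr_ge0 ?sqr_ge0 ?subr_ge0.
  by rewrite pmulr_rge0 // mulr_gt0.
Qed.

Section RealForms.
Local Open Scope complex_scope.
Variables (R : realType) (n : nat).
Local Notation C := R[i].

Definition qform (M : 'M[R]_n) (z : 'I_n -> R) : R :=
  \sum_i \sum_j z i * M i j * z j.

Lemma adjmx_form (P : 'M[C]_n) (v : 'cV[C]_n) :
  (adjmx v *m P *m v) ord0 ord0 = \sum_i \sum_j (v i ord0)^* * P i j * v j ord0.
Proof.
rewrite !mxE exchange_big; apply: eq_bigr => j _; rewrite !mxE big_distrl /=.
by apply: eq_bigr => i _; rewrite !mxE.
Qed.

Lemma hermitian_Im_diag (P : 'M[C]_n) i : adjmx P = P -> complex.Im (P i i) = 0.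
Proof.
move/(congr1 (fun M : 'M[C]_n => M i i)); rewrite mxE.
by case: (P i i) => x y /= [] y_eq; lra.
Qed.

Lemma psd_qform_Re (P : 'M[C]_n) (z : 'I_n -> R) :
  psd P -> 0 <= qform (map_mx (@complex.Re R) P) z.
Proof.
move=> [_ /(_ (\col_i (z i)%:C))]; rewrite adjmx_form lecE => /andP[_].
rewrite raddf_sum /=; congr (_ <= _); apply: eq_bigr => i _.
rewrite raddf_sum /=; apply: eq_bigr => j _.
by rewrite !mxE; case: (P i j) => x y /=; simpc.
Qed.

Lemma psd_realmx (M : 'M[R]_n) : M^T = M -> (forall z, 0 <= qform M z) ->
  psd (map_mx (real_complex R) M).
Proof.
move=> sM formM; split.
  by apply/matrixP => i j; rewrite !mxE conjc_real -[in LHS]sM mxE.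
move=> v; rewrite adjmx_form.
set re := fun i => complex.Re (v i ord0); set im := fun i => complex.Im (v i ord0).
have termE i j : (v i ord0)^* * (map_mx (real_complex R) M) i j * v j ord0 =
    (re i * M i j * re j + im i * M i j * im j) +i*
    (re i * M i j * im j - im i * M i j * re j).
  rewrite mxE /re /im; case: (v i ord0) => ? ?; case: (v j ord0) => ? ? /=.
  by apply/eqP; rewrite eq_complex /=; apply/andP; split; apply/eqP; ring.
set S := \sum_i _.
have ReS : complex.Re S = qform M re + qform M im.
  rewrite raddf_sum -big_split; apply: eq_bigr => i _.
  by rewrite raddf_sum -big_split; apply: eq_bigr => j _; rewrite termE.
have ImS : complex.Im S = 0.
  rewrite raddf_sum (eq_bigr (fun i => \sum_j re i * M i j * im j - \sum_j im i * M i j * re j)).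
    rewrite sumrB [in X in _ - X]exchange_big /=; apply/eqP; rewrite subr_eq0; apply/eqP.
    by apply: eq_bigr => i _; apply: eq_bigr => j _; rewrite -[in RHS]sM mxE; ring.
  by move=> i _; rewrite raddf_sum -sumrB; apply: eq_bigr => j _; rewrite termE.
by rewrite lecE ReS ImS eqxx addr_ge0.
Qed.

End RealForms.

Section Qubit.
Local Open Scope complex_scope.
Variable R : realType.
Local Notation C := R[i].
Local Notation Re := (@complex.Re R).

Local Notation i0 := (@Ordinal 2 0 isT).
Local Notation i1 := (@Ordinal 2 1 isT).
Local Notation o0 := (@Ordinal 4 0 isT).
Local Notation o1 := (@Ordinal 4 1 isT).
Local Notation o2 := (@Ordinal 4 2 isT).
Local Notation o3 := (@Ordinal 4 3 isT).

Lemma big_ord2E (V : nmodType) (F : 'I_2 -> V) : \sum_k F k = F i0 + F i1.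
Proof. by rewrite !big_ord_recr big_ord0 /= add0r; congr (_ + _); congr F; apply/val_inj. Qed.

Lemma big_ord4E (V : nmodType) (F : 'I_4 -> V) :
  \sum_k F k = F o0 + F o1 + F o2 + F o3.
Proof.
by rewrite !big_ord_recr big_ord0 /= add0r; congr (_ + _ + _ + _); congr F; apply/val_inj.
Qed.

Lemma ord2_cases (i : 'I_2) : i = i0 \/ i = i1.
Proof. by case: i => [[|[|//]] ?]; [left | right]; apply/val_inj. Qed.

Lemma idxE : (idx i0 i0 = o0) * (idx i0 i1 = o1) * (idx i1 i0 = o2) * (idx i1 i1 = o3).
Proof. by do ![split]; apply/val_inj; rewrite /= inordK. Qed.

Lemma rho_xE (a : R) i k : rho_x a i k = ((if i == k then 1 else a) / 2)%:C.
Proof.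
rewrite /rho_x !mxE; case: i k => [[|[|//]] ?] [[|[|//]] ?] /=;
by rewrite !(rmorphM, fmorphV, rmorph_nat, rmorph1) /=; ring.
Qed.

Lemma Re_rho_x (a : R) i k : Re (rho_x a i k) = (if i == k then 1 else a) / 2.
Proof. by rewrite rho_xE. Qed.

Lemma tr_rho_x (a : R) : (rho_x a)^T = rho_x a.
Proof. by apply/matrixP => i k; rewrite mxE !rho_xE eq_sym. Qed.

Lemma Czp_diag (p : R) k l : Czp p k l =
  if (k == l) && ((k == o1) || (k == o2)) then (2 `^ (p - 1) * 2)%:C else 0.
Proof.
rewrite /Czp /tens !mxE !big_ord2E !idxE.
by case: k l => [[|[|[|[|//]]]] ?] [[|[|[|[|//]]]] ?]; rewrite /= !mxE /=;
  rewrite ?rmorphM ?rmorph_nat; ring.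
Qed.

Lemma mxtrace_mul_Czp (P : 'M[C]_4) (p : R) :
  \tr (P *m Czp p) = (2 `^ (p - 1) * 2)%:C * (P o1 o1 + P o2 o2).
Proof. by rewrite /mxtrace !big_ord4E !mxE !big_ord4E !Czp_diag /=; ring. Qed.

Lemma coupling_rho_x_entries (a b : R) (P : 'M[C]_4) : coupling (rho_x a) (rho_x b) P ->
  [/\ Re (P o1 o1) = 2^-1 - Re (P o0 o0), Re (P o2 o2) = 2^-1 - Re (P o0 o0),
      Re (P o3 o3) = Re (P o0 o0),
      Re (P o1 o3) = b / 2 - Re (P o0 o2) /\ Re (P o3 o1) = b / 2 - Re (P o2 o0) &
      Re (P o2 o3) = a / 2 - Re (P o0 o1) /\ Re (P o3 o2) = a / 2 - Re (P o1 o0)].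
Proof.
move=> [_ [margin2 margin1]].
have m2 i k : Re (P (idx i i0) (idx k i0)) + Re (P (idx i i1) (idx k i1)) =
    (if i == k then 1 else b) / 2.
  by rewrite -Re_rho_x -margin2 mxE big_ord2E raddfD.
have m1 i k : Re (P (idx i0 i) (idx i0 k)) + Re (P (idx i1 i) (idx i1 k)) =
    (if i == k then 1 else a) / 2.
  by rewrite -Re_rho_x -tr_rho_x -margin1 mxE big_ord2E raddfD.
move: (m2 i0 i0) (m2 i0 i1) (m2 i1 i0) (m2 i1 i1) (m1 i0 i0) (m1 i0 i1) (m1 i1 i0).
rewrite !idxE /= => *.
by split; try split; lra.
Qed.

Lemma coupling_rho_x_sqr_le (a b : R) (P : 'M[C]_4) : coupling (rho_x a) (rho_x b) P ->
  Num.max (a ^+ 2) (b ^+ 2) <= 8 * Re (P o0 o0) * (1 - 2 * Re (P o0 o0)).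
Proof.
move=> cP; have [e11 e22 e33 [eb1 eb2] [ea1 ea2]] := coupling_rho_x_entries cP.
have form_ge0 (z : 'I_4 -> R) : 0 <= qform (map_mx Re P) z.
  by apply: psd_qform_Re; case: cP => [[]].
have disc (c : R) : (forall u w,
      0 <= 2 * Re (P o0 o0) * u ^+ 2 + c * u * w + (1 - 2 * Re (P o0 o0)) * w ^+ 2) ->
    c ^+ 2 <= 8 * Re (P o0 o0) * (1 - 2 * Re (P o0 o0)).
  by case/quad_form2_ge0P => _ _; lra.
have eq_ge0 (r s : R) : r = s -> 0 <= r -> 0 <= s by move=> ->.
rewrite ge_max; apply/andP; split; apply: disc => u w.
- have := addr_ge0 (form_ge0 (fun k => [:: u; w; 0; 0]`_k)) (form_ge0 (fun k => [:: 0; 0; w; u]`_k)).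
  rewrite /qform !big_ord4E /= !mxE e11 e22 e33 ea1 ea2.
  by apply: eq_ge0; field.
- have := addr_ge0 (form_ge0 (fun k => [:: u; 0; w; 0]`_k)) (form_ge0 (fun k => [:: 0; w; 0; u]`_k)).
  rewrite /qform !big_ord4E /= !mxE e11 e22 e33 eb1 eb2.
  by apply: eq_ge0; field.
Qed.

Lemma coupling_rho_x_mismatch_ge (a b : R) (P : 'M[C]_4) :
  coupling (rho_x a) (rho_x b) P ->
  1 - Num.sqrt (1 - Num.max (a ^+ 2) (b ^+ 2)) <= 2 * (Re (P o1 o1) + Re (P o2 o2)).
Proof.
move=> cP; have [-> -> _ _ _] := coupling_rho_x_entries cP.
have max_le := coupling_rho_x_sqr_le cP.
set x := Re (P o0 o0) in max_le *.
suff : 4 * x - 1 <= Num.sqrt (1 - Num.max (a ^+ 2) (b ^+ 2)) by lra.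
by rewrite (le_trans (ler_norm _)) // -sqrtr_sqr ler_wsqrtr //; lra.
Qed.

Lemma coupling_rho_x_cost_ge (a b p : R) (P : 'M[C]_4) :
  coupling (rho_x a) (rho_x b) P ->
  (2 `^ (p - 1) * (1 - Num.sqrt (1 - Num.max (a ^+ 2) (b ^+ 2))))%:C <= \tr (P *m Czp p).
Proof.
move=> cP; have hermP : adjmx P = P by case: cP => [[[]]].
have diag_real k : P k k = (Re (P k k))%:C.
  by move: (hermitian_Im_diag k hermP); case: (P k k) => x y /= ->.
rewrite mxtrace_mul_Czp (diag_real o1) (diag_real o2) -rmorphD -rmorphM lecR.
by rewrite -mulrA ler_wpM2l ?powR_ge0 ?coupling_rho_x_mismatch_ge.
Qed.

Definition coupling_mx (a b x y t : R) : 'M[R]_4 :=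
  \matrix_(k, l) (nth [::] [:: [:: x; a / 4; b / 4; x * t];
                              [:: a / 4; y; y * t; b / 4];
                              [:: b / 4; y * t; y; a / 4];
                              [:: x * t; b / 4; a / 4; x]] k)`_l.

Lemma coupling_mx_sym (a b x y t : R) :
  (coupling_mx a b x y t)^T = coupling_mx a b x y t.
Proof.
by apply/matrixP => k l; rewrite !mxE; case: k l => [[|[|[|[|//]]]] ?] [[|[|[|[|//]]]] ?].
Qed.

Lemma qform_coupling_mx (a b x y t : R) (z : 'I_4 -> R) :
  qform (coupling_mx a b x y t) z = 2^-1 *
    ((x * (1 + t) * (z o0 + z o3) ^+ 2 + (a + b) / 2 * (z o0 + z o3) * (z o1 + z o2)
      + y * (1 + t) * (z o1 + z o2) ^+ 2) +
     (x * (1 - t) * (z o0 - z o3) ^+ 2 + (a - b) / 2 * (z o0 - z o3) * (z o1 - z o2)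
      + y * (1 - t) * (z o1 - z o2) ^+ 2)).
Proof. by rewrite /qform !big_ord4E !mxE /=; field. Qed.

Lemma psd_coupling_mx (a b x y t : R) : 0 <= x -> 0 <= y -> -1 <= t <= 1 ->
  (a + b) ^+ 2 <= 16 * x * y * (1 + t) ^+ 2 -> (a - b) ^+ 2 <= 16 * x * y * (1 - t) ^+ 2 ->
  psd (map_mx (real_complex R) (coupling_mx a b x y t)).
Proof.
move=> x_ge0 y_ge0 /andP[t_ge t_le] disc_p disc_m.
apply: psd_realmx; first exact: coupling_mx_sym.
move=> z; rewrite qform_coupling_mx mulr_ge0 ?invr_ge0 ?ler0n //.
have quad_ge0 (A B C u w : R) : 0 <= A -> 0 <= C -> B ^+ 2 <= 4 * A * C ->
    0 <= A * u ^+ 2 + B * u * w + C * w ^+ 2.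
  by move=> A_ge0 C_ge0 disc; have [_ ->] := quad_form2_ge0P A B C.
by apply: addr_ge0; apply: quad_ge0; rewrite ?mulr_ge0 ?subr_ge0 //; lra.
Qed.

Lemma coupling_mx_is_coupling (a b x y t : R) : x + y = 2^-1 ->
  psd (map_mx (real_complex R) (coupling_mx a b x y t)) ->
  coupling (rho_x a) (rho_x b) (map_mx (real_complex R) (coupling_mx a b x y t)).
Proof.
move=> xy psdW; split; [split=> // | split; apply/matrixP => i k].
- rewrite /mxtrace big_ord4E !mxE /= -!rmorphD; congr (_%:C); lra.
- rewrite rho_xE mxE big_ord2E !mxE -rmorphD; congr (_%:C).
  by case: (ord2_cases i) (ord2_cases k) => -> [] ->; rewrite !idxE /=; lra.
- rewrite [RHS]mxE rho_xE mxE big_ord2E !mxE -rmorphD; congr (_%:C).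
  by case: (ord2_cases i) (ord2_cases k) => -> [] ->; rewrite !idxE /=; lra.
Qed.

Lemma max_sqr_ratio_bounds (a b m : R) : a ^+ 2 <= m -> b ^+ 2 <= m ->
  [/\ -1 <= a * b / m <= 1, (a + b) ^+ 2 <= m * (1 + a * b / m) ^+ 2
    & (a - b) ^+ 2 <= m * (1 - a * b / m) ^+ 2].
Proof.
move=> am bm; have m_ge0 : 0 <= m by apply: le_trans am; apply: sqr_ge0.
have [m_eq0|m_neq0] := eqVneq m 0.
  have [-> ->] : a = 0 /\ b = 0 by rewrite m_eq0 in am bm; nra.
  by rewrite !(mul0r, addr0, subr0, expr1n, mulr1, expr0n); split; rewrite ?lerN10 ?ler01.
have m_gt0 : 0 < m by rewrite lt_def m_neq0.
have pm_bound (e : R) : e ^+ 2 = 1 -> (a + e * b) ^+ 2 <= m * (1 + e * (a * b / m)) ^+ 2.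
  move=> e2; rewrite -subr_ge0 -(pmulr_rge0 _ m_gt0).
  have -> : m * (m * (1 + e * (a * b / m)) ^+ 2 - (a + e * b) ^+ 2) =
      (m - a ^+ 2) * (m - b ^+ 2) + (e ^+ 2 - 1) * b ^+ 2 * (a ^+ 2 - m) by field.
  by rewrite e2 subrr !mul0r addr0 mulr_ge0 ?subr_ge0.
have ab_le : `|a * b| <= m by rewrite ler_norml; apply/andP; split; nra.
split.
- by rewrite -ler_norml normrM normfV (ger0_norm m_ge0) ler_pdivrMr // mul1r.
- by have := pm_bound 1 (expr1n _ _); rewrite !mul1r.
- have sqrN1 : (- 1 : R) ^+ 2 = 1 by rewrite sqrrN expr1n.
  by have := pm_bound (- 1) sqrN1; rewrite !mulN1r.
Qed.

(* m = 0 forces a = b = 0, so the junk value 0 of a b / 0 is harmless. *)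
Definition optimal_coupling (a b : R) : 'M[C]_4 :=
  let m := Num.max (a ^+ 2) (b ^+ 2) in
  let s := Num.sqrt (1 - m) in
  map_mx (real_complex R) (coupling_mx a b ((1 + s) / 4) ((1 - s) / 4) (a * b / m)).

Lemma optimal_coupling_is_coupling (a b : R) : -1 <= a <= 1 -> -1 <= b <= 1 ->
  coupling (rho_x a) (rho_x b) (optimal_coupling a b).
Proof.
move=> a_bd b_bd; rewrite /optimal_coupling.
set m := Num.max _ _; set s := Num.sqrt _.
have am : a ^+ 2 <= m by rewrite le_max lexx.
have bm : b ^+ 2 <= m by rewrite le_max lexx orbT.
have m_le1 : m <= 1 by rewrite ge_max; apply/andP; split; nra.
have s_ge0 : 0 <= s by apply: sqrtr_ge0.
have s2 : s ^+ 2 = 1 - m by rewrite sqr_sqrtr ?subr_ge0.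
have [t_bd disc_p disc_m] := max_sqr_ratio_bounds am bm.
have s_le1 : s <= 1 by nra.
have xy : 16 * ((1 + s) / 4) * ((1 - s) / 4) = m by nra.
apply: coupling_mx_is_coupling; first by field.
by apply: psd_coupling_mx; rewrite ?xy //; lra.
Qed.

Lemma optimal_coupling_cost (a b p : R) : \tr (optimal_coupling a b *m Czp p) =
  (2 `^ (p - 1) * (1 - Num.sqrt (1 - Num.max (a ^+ 2) (b ^+ 2))))%:C.
Proof. by rewrite mxtrace_mul_Czp !mxE /= -rmorphD -rmorphM; congr (_%:C); field. Qed.

End Qubit.

Theorem proposition3p5 (R : realType) (a b p : R) :
  -1 <= a <= 1 -> -1 <= b <= 1 -> 1 <= p ->
  is_min_cost p (rho_x a) (rho_x b)
    (2 `^ (p - 1) * (1 - Num.sqrt (1 - Num.max (a ^+ 2) (b ^+ 2)))).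
Proof.
move=> a_bd b_bd _; split; last by move=> P; apply: coupling_rho_x_cost_ge.
exists (optimal_coupling a b).
by split; [apply: optimal_coupling_is_coupling | apply: optimal_coupling_cost].
Qed.
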